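(* Let $M$ be a matroid of rank $r$ on a finite linearly ordered set $E$ and let $0\le k\le r-1$. Every $V\in\mathcal V_k$ is a circuit of $M$.
   Context: Graded lexicographic order on $2^E$: $X\prec Y$ if $|X|<|Y|$, or $|X|=|Y|$ and $\min(X\triangle Y)\in X$; $\min\mathcal X$ is the $\prec$-smallest member. $X$ is $k$-closed in $M$ if $\mathrm{cl}_M(Y)\subseteq X$ for all $Y\subseteq X$ with $|Y|\le k$; $\mathrm{cl}_k(X)$ is the intersection of all $k$-closed supersets of $X$ (so $\mathrm{cl}_{-1}(X)=X$). For a flat $F$ of rank $k$, $U^*_F=\min\{U:\mathrm{cl}_{k-1}(U)=F\}$, and $\mathcal U^*_k=\{U^*_F: F\text{ a flat of rank }k,\ |U^*_F|>k\}$. A subset $V\subseteq U$ is consecutive in $U$ if there are no $e,g\in V$ and $f\in U\setminus V$ with $e<f<g$. For $U\in\mathcal U^*_k$, $\mathcal V(U)$ is the set of $(k+1)$-subsets of $U$ that are consecutive in $U$, and $\mathcal V_k=\bigcup_{U\in\mathcal U^*_k}\mathcal V(U)$. *)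

From HB Require Import structures.
From mathcomp Require Import all_boot all_order all_algebra.
Set Implicit Arguments. Unset Strict Implicit. Unset Printing Implicit Defensive.
Import Order.TTheory GRing.Theory Num.Theory.

Record matroid (T : finType) := Matroid {
  indep : {set T} -> bool;
  indep0 : indep set0;
  indep_sub : forall A B : {set T}, A \subset B -> indep B -> indep A;
  indep_exch : forall A B : {set T}, indep A -> indep B -> (#|A| < #|B|)%N ->
     exists2 e, e \in B :\: A & indep (e |: A)
}.

Section Defs.
Context (d : Order.disp_t) (T : finOrderType d) (M : matroid T).

Definition rk (X : {set T}) : nat := \max_(Y : {set T} | (Y \subset X) && indep M Y) #|Y|.

Definition mrank : nat := rk [set: T].

Definition cl (X : {set T}) : {set T} := [set e | rk (e |: X) == rk X].

Definition is_flat (F : {set T}) : bool := cl F == F.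

Definition circuit (C : {set T}) : Prop :=
  ~~ indep M C /\ forall D : {set T}, D \proper C -> indep M D.

(* X is k-closed (k an integer, so that k = -1 is allowed) *)
Definition kclosed (k : int) (X : {set T}) : bool :=
  [forall Y : {set T}, ((Y \subset X) && ((#|Y|%:Z <= k)%R)) ==> (cl Y \subset X)].

Definition clk (k : int) (X : {set T}) : {set T} :=
  \bigcap_(Y : {set T} | kclosed k Y && (X \subset Y)) Y.

Definition glex_lt (X Y : {set T}) : bool :=
  (#|X| < #|Y|)%N ||
  ((#|X| == #|Y|) &&
   [exists e, (e \in X :\: Y) &&
      [forall f, (f \in (X :\: Y) :|: (Y :\: X)) ==> (e <= f)%O]]).

Definition is_glex_min (P : {set T} -> Prop) (U : {set T}) : Prop :=
  P U /\ forall U' : {set T}, P U' -> U' <> U -> glex_lt U U'.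

Definition Ustar (k : nat) (F U : {set T}) : Prop :=
  is_glex_min (fun U' => clk (k%:Z - 1) U' = F) U.

Definition in_Ustar_k (k : nat) (U : {set T}) : Prop :=
  exists F : {set T}, [/\ is_flat F, rk F = k, Ustar k F U & (k < #|U|)%N].

Definition consecutive (V U : {set T}) : bool :=
  ~~ [exists e, exists f, exists g,
        [&& e \in V, g \in V, f \in U :\: V, (e < f)%O & (f < g)%O]].

Definition in_V_k (k : nat) (V : {set T}) : Prop :=
  exists U : {set T}, [/\ in_Ustar_k k U, V \subset U, #|V| = k.+1 & consecutive V U].

End Defs.

From HB Require Import structures.
From mathcomp Require Import all_boot all_order all_algebra zify.
Set Implicit Arguments. Unset Strict Implicit. Unset Printing Implicit Defensive.
Import Order.TTheory GRing.Theory Num.Theory.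

(* Since [U ⊆ cl_{k-1}(U) = F], the (k+1)-set [V ⊆ U] exceeds [rk F = k] and
   is dependent.  Every proper subset of [V] has at most [k] elements, and any
   dependent set of at most [k] elements of [U] would contain a circuit [C];
   an element [e] of [C] lies in [cl (C :\ e)] with [#|C :\ e| <= k - 1], so
   deleting [e] from [U] does not change [cl_{k-1}], contradicting the
   ≺-minimality of [U]. *)

Section MatroidRank.
Context (d : Order.disp_t) (T : finOrderType d) (M : matroid T).

Lemma indep_leq_rk (X Y : {set T}) :
  Y \subset X -> indep M Y -> (#|Y| <= rk M X)%N.
Proof.
by move=> sYX iY; apply: (leq_bigmax_cond (F := fun Y : {set T} => #|Y|)); rewrite sYX iY.
Qed.

Lemma rk_leq_card (X : {set T}) : (rk M X <= #|X|)%N.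
Proof. by apply/bigmax_leqP=> Y /andP[sYX _]; apply: subset_leq_card. Qed.

Lemma rk_indep (X : {set T}) : indep M X -> rk M X = #|X|.
Proof. by move=> iX; apply/eqP; rewrite eqn_leq rk_leq_card indep_leq_rk. Qed.

Lemma dependent_sub_circuit (W : {set T}) :
  ~~ indep M W -> exists2 C : {set T}, C \subset W & circuit M C.
Proof.
move=> dW.
have [C /minsetP[/andP[sCW dC] minC]] :
    {C : {set T} | minset (fun C : {set T} => (C \subset W) && ~~ indep M C) C}.
  by apply: ex_minset; exists W; rewrite subxx dW.
exists C => //; split=> // D pDC; apply/negPn/negP=> dD.
have sDW : D \subset W by apply: subset_trans (proper_sub pDC) sCW.
have eqDC : D = C by apply: minC (proper_sub pDC); rewrite sDW dD.
by move: pDC; rewrite eqDC properxx.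
Qed.

Lemma circuit_neq0 (C : {set T}) : circuit M C -> C != set0.
Proof. by case=> dC _; apply: contraNneq dC => ->; apply: indep0. Qed.

Lemma circuit_mem_cl (C : {set T}) (e : T) :
  circuit M C -> e \in C -> e \in cl M (C :\ e).
Proof.
move=> [dC indepC] eC.
have pC : C :\ e \proper C by rewrite properD1.
rewrite inE setD1K // (rk_indep (indepC _ pC)) eqn_leq.
rewrite indep_leq_rk ?subD1set ?indepC // andbT.
apply/bigmax_leqP=> Y /andP[sYC iY].
have pYC : Y \proper C by rewrite properEneq sYC andbT; apply: contraNneq dC => <-.
by have := proper_card pYC; rewrite (cardsD1 e C) eC.
Qed.

End MatroidRank.

Section Closures.
Context (d : Order.disp_t) (T : finOrderType d) (M : matroid T).

Lemma sub_clk (k : int) (X : {set T}) : X \subset clk M k X.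
Proof. by apply/subsetP=> x xX; apply/bigcapP=> Y /andP[_ /subsetP]; apply. Qed.

Lemma clk_setD1 (k : int) (U X : {set T}) (e : T) :
  e \in U -> X \subset U :\ e -> (#|X|%:Z <= k)%R -> e \in cl M X ->
  clk M k (U :\ e) = clk M k U.
Proof.
move=> eU sXU cardX eX; apply: eq_bigl => Y.
apply/andP/andP=> [[kY sUeY]|[kY sUY]]; split=> //; last first.
  exact: subset_trans (subD1set U e) sUY.
rewrite -(setD1K eU) subUset sUeY andbT sub1set.
move/forallP/(_ X): kY; rewrite (subset_trans sXU sUeY) cardX => /subsetP.
exact.
Qed.

Lemma glex_lt_card (X Y : {set T}) : glex_lt X Y -> (#|X| <= #|Y|)%N.
Proof. by case/orP=> [/ltnW // | /andP[/eqP-> _]]. Qed.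

End Closures.

Section MinimalGenerators.
Context (d : Order.disp_t) (T : finOrderType d) (M : matroid T).
Variables (k : nat) (F U : {set T}).
Hypothesis UF : Ustar M k F U.

Lemma Ustar_sub_flat : U \subset F.
Proof. by case: UF => <- _; apply: sub_clk. Qed.

Lemma Ustar_small_indep (W : {set T}) :
  W \subset U -> (#|W| <= k)%N -> indep M W.
Proof.
move=> sWU cardW; apply/negPn/negP=> /dependent_sub_circuit[C sCW circC].
have [e eC] := set0Pn _ (circuit_neq0 circC).
have eU : e \in U by apply: (subsetP sWU); apply: (subsetP sCW).
have sCU : C :\ e \subset U :\ e by apply: setSD; apply: subset_trans sCW sWU.
have cardCe : (#|C :\ e|%:Z <= k%:Z - 1)%R.
  have := subset_leq_card sCW; rewrite (cardsD1 e C) eC; lia.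
have clkUe := clk_setD1 eU sCU cardCe (circuit_mem_cl circC eC).
have [clkU minU] := UF.
have neqUe : U :\ e <> U by move/setP/(_ e); rewrite !inE eqxx eU.
have := glex_lt_card (minU _ (etrans clkUe clkU) neqUe).
by rewrite (cardsD1 e U) eU ltnn.
Qed.

End MinimalGenerators.

Theorem lemma5p6 (d : Order.disp_t) (T : finOrderType d) (M : matroid T)
  (k : nat) (hk : (k < mrank M)%N) (V : {set T}) :
  in_V_k M k V -> circuit M V.
Proof.
move=> [U [[F [_ rkF UF _]] sVU cardV _]]; split.
  apply/negP=> iV.
  have := indep_leq_rk (subset_trans sVU (Ustar_sub_flat UF)) iV.
  by rewrite rkF cardV ltnn.
move=> D pDV; apply: (Ustar_small_indep UF (subset_trans (proper_sub pDV) sVU)).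
by rewrite -ltnS -cardV proper_card.
Qed.
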